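(* Let $\mathfrak S$ be a commutative semiring with identity. Each of the following sets of ideals of $\mathfrak S$, endowed with the ideal topology, is quasi-compact: the set of maximal ideals, the set of prime ideals, the set of strongly irreducible ideals, the set of primary ideals, the set of irreducible ideals, and the set of radical ideals.
   Context: A semiring $(\mathfrak S,+,0,\cdot,1)$ has $(\mathfrak S,+,0)$ a commutative monoid, $(\mathfrak S,\cdot,1)$ a monoid, $0r=r0=0$, and two-sided distributivity; all semirings are commutative. An ideal is a nonempty proper subset closed under addition and under multiplication by elements of $\mathfrak S$. Prime: $ab\in\mathfrak p\Rightarrow a\in\mathfrak p$ or $b\in\mathfrak p$. Maximal: not properly contained in another ideal. Primary: $xy\in\mathfrak a\Rightarrow x\in\mathfrak a$ or $y^n\in\mathfrak a$ for some $n$. Strongly irreducible: for ideals $\mathfrak a,\mathfrak b$, $\mathfrak a\cap\mathfrak b\subseteq\mathfrak s$ implies $\mathfrak a\subseteq\mathfrak s$ or $\mathfrak b\subseteq\mathfrak s$. Irreducible: $\mathfrak a\cap\mathfrak b=\mathfrak s$ implies $\mathfrak a=\mathfrak s$ or $\mathfrak b=\mathfrak s$. Radical: $\mathfrak a=\sqrt{\mathfrak a}=\{r\mid r^n\in\mathfrak a\text{ for some }n\ge1\}$. For a set $\sigma_{\mathfrak S}$ of ideals and an ideal $\mathfrak a$, $\mathfrak a^{\uparrow}=\{\mathfrak x\in\sigma_{\mathfrak S}\mid\mathfrak a\subseteq\mathfrak x\}$; the ideal topology on $\sigma_{\mathfrak S}$ has the sets $\mathfrak a^{\uparrow}$ as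 a subbasis of closed sets. *)

(* Commutative semirings with 1 are [comPzSemiRingType]
   (the trivial semiring 0 = 1 is allowed, as in the paper's definition). *)
From Stdlib Require List.
From mathcomp Require Import all_boot all_algebra.
Set Implicit Arguments. Unset Strict Implicit. Unset Printing Implicit Defensive.
Import GRing.Theory.
Local Open Scope ring_scope.

Section Ideals.
Variable S : comPzSemiRingType.

Definition subset (a b : S -> Prop) := forall x, a x -> b x.
Definition seteq (a b : S -> Prop) := forall x, a x <-> b x.
Definition inter (a b : S -> Prop) : S -> Prop := fun x => a x /\ b x.

Definition is_ideal (a : S -> Prop) : Prop :=
  (exists x, a x) /\ (exists x, ~ a x) /\
  (forall x y, a x -> a y -> a (x + y)) /\
  (forall r x, a x -> a (r * x)).

Definition is_prime (p : S -> Prop) : Prop :=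
  is_ideal p /\ forall x y, p (x * y) -> p x \/ p y.

Definition is_maximal (m : S -> Prop) : Prop :=
  is_ideal m /\ forall b, is_ideal b -> subset m b -> seteq b m.

Definition is_primary (a : S -> Prop) : Prop :=
  is_ideal a /\ forall x y, a (x * y) -> a x \/ exists n : nat, a (y ^+ n).

Definition is_strongly_irreducible (s : S -> Prop) : Prop :=
  is_ideal s /\ forall a b, is_ideal a -> is_ideal b ->
    subset (inter a b) s -> subset a s \/ subset b s.

Definition is_irreducible (s : S -> Prop) : Prop :=
  is_ideal s /\ forall a b, is_ideal a -> is_ideal b ->
    seteq (inter a b) s -> seteq a s \/ seteq b s.

Definition radical (a : S -> Prop) : S -> Prop :=
  fun r => exists n : nat, (1 <= n)%N /\ a (r ^+ n).

Definition is_radical (a : S -> Prop) : Prop :=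
  is_ideal a /\ seteq a (radical a).

(* The ideal topology on a set [sigma] of ideals: subbasic closed sets are
   a^up = {x in sigma | a ⊆ x} for ideals a.  Hence U ⊆ sigma is open iff
   each point of U lies in a finite intersection of subbasic open sets
   (complements of a^up in sigma) contained in U (empty intersection = sigma). *)
Definition up (sigma : (S -> Prop) -> Prop) (a : S -> Prop) : (S -> Prop) -> Prop :=
  fun x => sigma x /\ subset a x.

Definition ideal_open (sigma : (S -> Prop) -> Prop) (U : (S -> Prop) -> Prop) : Prop :=
  (forall x, U x -> sigma x) /\
  forall x, U x -> exists l : list (S -> Prop),
    (forall a, List.In a l -> is_ideal a) /\
    (forall a, List.In a l -> ~ up sigma a x) /\
    (forall y, sigma y -> (forall a, List.In a l -> ~ up sigma a y) -> U y).

Definition quasi_compact (sigma : (S -> Prop) -> Prop) : Prop :=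
  forall (I : Type) (U : I -> (S -> Prop) -> Prop),
    (forall i, ideal_open sigma (U i)) ->
    (forall x, sigma x -> exists i, U i x) ->
    exists l : list I, forall x, sigma x -> exists i, List.In i l /\ U i x.

End Ideals.

(* Any set sigma of ideals containing all maximal ideals is quasi-compact, and
   each of the six classes contains the maximal ideals (maximal => prime, and
   prime ideals are strongly irreducible, irreducible, primary and radical).
   Given an open cover of sigma, call e covered when the points of sigma
   avoiding e lie in one member of the cover.  If 1 is a combination
   sum r_k e_k of covered elements, every ideal misses some e_k and finitely
   many members suffice.  Otherwise the covered elements lie in a maximal
   ideal m; but a basic neighbourhood of m inside a member of the cover is
   given by finitely many ideals not contained in the prime m, and a product
   of witnesses is a covered element outside m. *)
From Pilot Require Import Defs.
From mathcomp Require Import all_boot all_algebra.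
From mathcomp Require Import ring.
From mathcomp Require classical_sets.
From Stdlib Require Import Classical.
Set Implicit Arguments. Unset Strict Implicit. Unset Printing Implicit Defensive.
Import GRing.Theory.
Local Open Scope ring_scope.

Section Ideals.
Variable S : comPzSemiRingType.
Implicit Types (a b m p s x : S -> Prop) (r u v y z : S).

Definition add_mul_closed b :=
  (forall y z, b y -> b z -> b (y + z)) /\ (forall r y, b y -> b (r * y)).

Lemma ideal_closed a : is_ideal a -> add_mul_closed a.
Proof. by case=> _ []. Qed.

Lemma idealD a y z : is_ideal a -> a y -> a z -> a (y + z).
Proof. by move/ideal_closed=> [aD _]; exact: aD. Qed.

Lemma idealMl a r y : is_ideal a -> a y -> a (r * y).
Proof. by move/ideal_closed=> [_ aM]; exact: aM. Qed.

Lemma idealMr a r y : is_ideal a -> a y -> a (y * r).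
Proof. by rewrite mulrC; exact: idealMl. Qed.

Lemma ideal0 a : is_ideal a -> a 0.
Proof.
by move=> Ha; case: (Ha) => [[y ay] _]; rewrite -(mul0r y); exact: idealMl.
Qed.

Lemma ideal_not1 a : is_ideal a -> ~ a 1.
Proof.
move=> Ha; case: (Ha) => _ [[y ay] _] a1.
by apply: ay; rewrite -(mulr1 y); exact: idealMl.
Qed.

Lemma closed_ideal b z : add_mul_closed b -> b z -> ~ b 1 -> is_ideal b.
Proof. by move=> [bD bM] bz b1; split; [exists z | split; [exists 1 | ]]. Qed.

Lemma not_subset a b : ~ Defs.subset a b -> exists y, a y /\ ~ b y.
Proof.
move=> nab; apply: NNPP => none; apply: nab => y ay.
by apply: NNPP => by'; apply: none; exists y.
Qed.

Definition adjoin m y : S -> Prop := fun z => exists u r, m u /\ z = u + r * y.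

Lemma adjoin_closed m y : add_mul_closed m -> add_mul_closed (adjoin m y).
Proof.
move=> [mD mM]; split.
  move=> _ _ [u1 [r1 [m1 ->]]] [u2 [r2 [m2 ->]]].
  by exists (u1 + u2), (r1 + r2); split; [exact: mD | ring].
by move=> r _ [u [s [mu ->]]]; exists (r * u), (r * s); split; [exact: mM | ring].
Qed.

Lemma maximal_adjoin_one m y : is_maximal m -> ~ m y -> adjoin m y 1.
Proof.
move=> [Hm max_m] my; apply: NNPP => adj1.
have adj_y : adjoin m y y by exists 0, 1; split; [exact: ideal0 | ring].
have m_adj : Defs.subset m (adjoin m y).
  by move=> z mz; exists z, 0; split; [| ring].
have adj_ideal := closed_ideal (adjoin_closed y (ideal_closed Hm)) adj_y adj1.
by apply: my; apply/(max_m _ adj_ideal m_adj).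
Qed.

Lemma maximal_prime m : is_maximal m -> is_prime m.
Proof.
move=> max_m; have Hm := proj1 max_m; split=> // y z myz.
apply: NNPP => /not_or_and [my mz].
have [u [r [mu e1]]] := maximal_adjoin_one max_m my.
have [v [s [mv e2]]] := maximal_adjoin_one max_m mz.
apply: (ideal_not1 Hm).
have -> : 1 = u * (v + s * z) + r * y * v + r * s * (y * z).
  by rewrite -[1]mul1r {1}e1 e2; ring.
apply: (idealD Hm); last exact: idealMl.
by apply: (idealD Hm); [exact: idealMr | exact: idealMl].
Qed.

Lemma prime_strongly_irreducible p : is_prime p -> is_strongly_irreducible p.
Proof.
move=> [Hp prime_p]; split=> // a b Ha Hb ab_p.
apply: NNPP => /not_or_and [/not_subset [y [ay py]] /not_subset [z [bz pz]]].
have : p (y * z) by apply: ab_p; split; [exact: idealMr | exact: idealMl].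
by case/prime_p.
Qed.

Lemma strongly_irreducible_irreducible s :
  is_strongly_irreducible s -> is_irreducible s.
Proof.
move=> [Hs strong_s]; split=> // a b Ha Hb ab_s.
have [sa|sb] := strong_s a b Ha Hb (fun z => proj1 (ab_s z)); [left | right].
  by move=> z; split=> [/sa // | /(ab_s z) []].
by move=> z; split=> [/sb // | /(ab_s z) []].
Qed.

Lemma prime_primary p : is_prime p -> is_primary p.
Proof.
move=> [Hp prime_p]; split=> // y z /prime_p [py|pz]; first by left.
by right; exists 1%N; rewrite expr1.
Qed.

Lemma prime_exp p y n : is_prime p -> p (y ^+ n.+1) -> p y.
Proof.
case=> Hp prime_p; elim: n => [|n IH]; first by rewrite expr1.
by rewrite exprS => /prime_p [].
Qed.

Lemma prime_radical p : is_prime p -> is_radical p.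
Proof.
move=> pp; split; first by case: pp.
move=> y; split=> [py | [[|n] [n_ge1 pyn]]] //; last exact: prime_exp pyn.
by exists 1%N; rewrite expr1.
Qed.

Lemma prime_avoid p (L : list (S -> Prop)) : is_prime p ->
  (forall a, List.In a L -> is_ideal a) ->
  (forall a, List.In a L -> ~ Defs.subset a p) ->
  exists e, ~ p e /\ forall a, List.In a L -> a e.
Proof.
case=> Hp prime_p; elim: L => [|a L IH] L_ideal L_notsub.
  by exists 1; split=> //; exact: ideal_not1.
have [e [pe Le]] := IH (fun b Lb => L_ideal b (or_intror Lb))
                       (fun b Lb => L_notsub b (or_intror Lb)).
have [y [ay py]] := not_subset (L_notsub a (or_introl erefl)).
exists (e * y); split; first by case/prime_p.
have Ha := L_ideal a (or_introl erefl).
move=> b [<-|Lb]; first exact: idealMl Ha ay.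
exact: idealMr (L_ideal b (or_intror Lb)) (Le b Lb).
Qed.

Lemma exists_maximal_superset a :
  is_ideal a -> exists m, is_maximal m /\ Defs.subset a m.
Proof.
move=> Ha; have [[y0 ay0] _] := Ha.
(* Asking [a ⊆ b] only of nonempty [b] keeps the empty union admissible. *)
pose P b := [/\ add_mul_closed b, ~ b 1 & (exists z, b z) -> Defs.subset a b].
have chainP F : classical_sets.subset F P ->
    classical_sets.total_on F classical_sets.subset ->
    P (classical_sets.bigcup F id).
  move=> FP Ftot; split.
  - split=> [y z [X FX Xy] [Y FY Yz] | r y [X FX Xy]].
      have [XY|YX] := Ftot X Y FX FY.
        by have [[YD _] _ _] := FP Y FY; exists Y => //; apply: YD => //; exact: XY.
      by have [[XD _] _ _] := FP X FX; exists X => //; apply: XD => //; exact: YX.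
    by have [[_ XM] _ _] := FP X FX; exists X => //; exact: XM.
  - by move=> [X FX X1]; have [_ + _] := FP X FX.
  - move=> [z [X FX Xz]] w aw; have [_ _ aX] := FP X FX.
    by exists X => //; apply: aX => //; exists z.
have [A [[AC A1 aA] Amax]] := classical_sets.Zorn_bigcup chainP.
have Pa : P a by split; [exact: ideal_closed | exact: ideal_not1 | move=> _ y].
have [z Az] : exists z, A z.
  apply: NNPP => A0; apply: (Amax a _ Pa); split=> [z Az | aA'].
    by case: A0; exists z.
  by apply: A0; exists y0; exact: aA'.
have {}aA := aA (ex_intro _ z Az).
have HA := closed_ideal AC Az A1.
exists A; split=> //; split=> // b Hb Ab x; split=> [bx | /Ab //].
apply: NNPP => Ax; apply: (Amax b).
  by split=> // bA; exact: Ax (bA x bx).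
split; [exact: ideal_closed | exact: ideal_not1 | move=> _ y /aA; exact: Ab].
Qed.

Lemma ideal_sum a (l : seq (S * S)) :
  is_ideal a -> {in l, forall q, a q.2} -> a (\sum_(q <- l) q.1 * q.2).
Proof.
move=> Ha; elim: l => [|q l IH] al; first by rewrite big_nil; exact: ideal0.
rewrite big_cons; apply: (idealD Ha); first exact: idealMl Ha (al q (mem_head q l)).
by apply: IH => q' lq'; apply: al; rewrite in_cons lq' orbT.
Qed.

Definition span (A : S -> Prop) : S -> Prop := fun z =>
  exists2 l : seq (S * S), {in l, forall q, A q.2} & z = \sum_(q <- l) q.1 * q.2.

Lemma span_closed A : add_mul_closed (span A).
Proof.
split=> [_ _ [l1 A1 ->] [l2 A2 ->] | r _ [l Al ->]].
  exists (l1 ++ l2); last by rewrite big_cat.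
  by move=> q; rewrite mem_cat => /orP [/A1|/A2].
exists [seq (r * q.1, q.2) | q <- l].
  by move=> ? /mapP [q lq ->]; exact: (Al q lq).
by rewrite mulr_sumr big_map; apply: eq_bigr => q _; rewrite mulrA.
Qed.

Lemma span_in A e : A e -> span A e.
Proof.
move=> Ae; exists [:: (1, e)]; last by rewrite big_seq1 mul1r.
by move=> q; rewrite inE => /eqP ->.
Qed.

Lemma span_ideal A : ~ span A 1 -> is_ideal (span A).
Proof. by apply: closed_ideal (span_closed A) _; exists [::]; rewrite ?big_nil. Qed.

Section QuasiCompact.
Variable sigma : (S -> Prop) -> Prop.
Hypothesis sigma_ideal : forall x, sigma x -> is_ideal x.
Hypothesis sigma_maximal : forall m, is_maximal m -> sigma m.

Section Cover.
Variables (I : Type) (U : I -> (S -> Prop) -> Prop).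
Hypothesis U_open : forall i, ideal_open sigma (U i).
Hypothesis U_cover : forall x, sigma x -> exists i, U i x.

Definition covered e := exists i, forall x, sigma x -> ~ x e -> U i x.

Lemma covered_subcover (es : seq S) : {in es, forall e, covered e} ->
  exists li : list I, forall x, sigma x -> (exists2 e, e \in es & ~ x e) ->
    exists i, List.In i li /\ U i x.
Proof.
elim: es => [|e es IH] es_cov; first by exists nil => x _ [].
have [li Hli] := IH (fun e' es_e' => es_cov e' (@mem_behead _ (e :: es) e' es_e')).
have [i Hi] := es_cov e (mem_head e es).
exists (i :: li) => x sx [e']; rewrite in_cons => /orP [/eqP -> xe | es_e' xe'].
  by exists i; split; [left | exact: Hi].
have [j [lj Uj]] := Hli x sx (ex_intro2 _ _ e' es_e' xe').
by exists j; split; [right |].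
Qed.

Lemma span_covered_one_subcover : span covered 1 ->
  exists li : list I, forall x, sigma x -> exists i, List.In i li /\ U i x.
Proof.
move=> [l l_cov e1].
have [li Hli] : exists li : list I, forall x, sigma x ->
    (exists2 e, e \in map snd l & ~ x e) -> exists i, List.In i li /\ U i x.
  by apply: covered_subcover => _ /mapP [q lq ->]; exact: l_cov.
exists li => x sx; apply: Hli => //; apply: NNPP => x_all.
apply: (ideal_not1 (sigma_ideal sx)); rewrite e1.
apply: (ideal_sum (sigma_ideal sx)) => q lq.
by apply: NNPP => xq; apply: x_all; exists q.2 => //; exact: map_f.
Qed.

Lemma maximal_misses_covered m : is_maximal m -> exists e, covered e /\ ~ m e.
Proof.
move=> max_m; have sm := sigma_maximal max_m.
have [i Uim] := U_cover sm.
have [L [L_ideal [L_notup L_sub]]] := (U_open i).2 m Uim.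
have [e [me Le]] := prime_avoid (maximal_prime max_m) L_ideal
                      (fun a La sub => L_notup a La (conj sm sub)).
exists e; split=> //; exists i => x sx xe.
by apply: L_sub => // a La [_ sub]; exact: xe (sub e (Le a La)).
Qed.

Lemma open_cover_finite_subcover :
  exists li : list I, forall x, sigma x -> exists i, List.In i li /\ U i x.
Proof.
have [span1|span_not1] := classic (span covered 1).
  exact: span_covered_one_subcover.
have [m [max_m span_m]] := exists_maximal_superset (span_ideal span_not1).
have [e [cov_e me]] := maximal_misses_covered max_m.
by case: me; apply: span_m; exact: span_in.
Qed.

End Cover.

Lemma quasi_compact_of_maximal : quasi_compact sigma.
Proof. move=> I U; exact: open_cover_finite_subcover. Qed.

End QuasiCompact.

End Ideals.

Theorem corollary3p4 (S : comPzSemiRingType) :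
  quasi_compact (@is_maximal S) /\
  quasi_compact (@is_prime S) /\
  quasi_compact (@is_strongly_irreducible S) /\
  quasi_compact (@is_primary S) /\
  quasi_compact (@is_irreducible S) /\
  quasi_compact (@is_radical S).
Proof.
have strongly_irreducible m : is_maximal m -> is_strongly_irreducible m.
  by move/maximal_prime/prime_strongly_irreducible.
split; first by apply: quasi_compact_of_maximal => [x []|].
split; first by apply: quasi_compact_of_maximal => [x []|m /maximal_prime].
split; first by apply: quasi_compact_of_maximal => [x []|m /strongly_irreducible].
split; first by apply: quasi_compact_of_maximal => [x []|m /maximal_prime/prime_primary].
split; first by apply: quasi_compact_of_maximal =>
  [x []|m /strongly_irreducible/strongly_irreducible_irreducible].
by apply: quasi_compact_of_maximal => [x []|m /maximal_prime/prime_radical].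
Qed.
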